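(* Let $G$ be a finitely generated group, $(X,\mathcal{U})$ a first countable, locally compact, paracompact, Hausdorff uniform space, and $\Phi\in Act(G,X)$ an action with a proper expansive entourage $A$. For a non-empty finite set $F\subset G$ let $V_F(A)=\{(x,y)\in X\times X: (\Phi_g(x),\Phi_g(y))\in A \text{ for all } g\in F\}$. Then for any wide $U\in\mathcal{U}$ there exists a non-empty finite set $F\subset G$ with $V_F(A)\subset U$.
   Context: $X$ carries the topology induced by $\mathcal{U}$. $Act(G,X)$: maps $\Phi:G\times X\to X$ with each $\Phi_g$ a uniform equivalence, $\Phi_e=\mathrm{id}$, $\Phi_{g_1g_2}=\Phi_{g_1}\circ\Phi_{g_2}$. A closed entourage $A$ is an expansive entourage for $\Phi$ if for any distinct $x,y$ there is $g\in G$ with $(\Phi_g(x),\Phi_g(y))\notin A$. An entourage $M$ is proper if for every compact $K\subset X$ the set $M[K]=\bigcup_{x\in K}\{y:(x,y)\in M\}$ is compact. An entourage $U$ is wide if there is a compact $K\subset X$ with $U\cup(K\times X)=X\times X$. *)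

From HB Require Import structures.
From mathcomp Require Import all_boot monoid.
From mathcomp Require Import all_classical all_reals all_analysis.
Set Implicit Arguments. Unset Strict Implicit. Unset Printing Implicit Defensive.
Local Open Scope classical_set_scope.

Definition finitely_generated (G : groupType) : Prop :=
  exists S : set G, finite_set S /\
    forall H : set G, S `<=` H -> H (@monoid.one G) ->
      (forall x y, H x -> H y -> H (@monoid.mul G x y)) ->
      (forall x, H x -> H (@monoid.inv G x)) -> H = setT.

Definition first_countable (T : topologicalType) : Prop :=
  forall x : T, exists B : nat -> set T,
    (forall n, nbhs x (B n)) /\ (forall N, nbhs x N -> exists n, B n `<=` N).

Definition paracompact (T : topologicalType) : Prop :=
  forall (I : Type) (C : I -> set T), (forall i, open (C i)) ->
    \bigcup_i C i = setT ->
    exists (J : Type) (D : J -> set T),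
      [/\ (forall j, open (D j)), \bigcup_j D j = setT,
          (forall j, exists i, D j `<=` C i) &
          (forall x : T, exists N : set T, nbhs x N /\ finite_set [set j | D j `&` N !=set0])].

Definition unif_equiv (X : uniformType) (f : X -> X) : Prop :=
  exists g : X -> X, [/\ cancel f g, cancel g f,
                         unif_continuous f & unif_continuous g].

Definition is_action (G : groupType) (X : uniformType) (Phi : G -> X -> X) : Prop :=
  [/\ (forall g, unif_equiv (Phi g)),
      Phi (@monoid.one G) = id &
      (forall g1 g2, Phi (@monoid.mul G g1 g2) = Phi g1 \o Phi g2)].

Definition expansive_entourage (G : groupType) (X : uniformType)
    (Phi : G -> X -> X) (A : set (X * X)) : Prop :=
  [/\ entourage A, closed A &
      forall x y : X, x <> y -> exists g : G, ~ A (Phi g x, Phi g y)].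

Definition ent_image (X : Type) (M : set (X * X)) (K : set X) : set X :=
  [set y | exists2 x, K x & M (x, y)].

Definition proper_entourage (X : uniformType) (M : set (X * X)) : Prop :=
  entourage M /\ forall K : set X, compact K -> compact (ent_image M K).

Definition wide_entourage (X : uniformType) (U : set (X * X)) : Prop :=
  entourage U /\ exists K : set X, compact K /\ U `|` (K `*` setT) = setT.

Definition VF (G : groupType) (X : Type) (Phi : G -> X -> X)
    (F : set G) (A : set (X * X)) : set (X * X) :=
  [set xy | forall g, F g -> A (Phi g xy.1, Phi g xy.2)].

(* Since A is proper and U is wide, only pairs in the
   compact set K x A[K] matter.  Each such pair lies either in the interior of
   U (if it is on the diagonal) or, by expansiveness, in one of the open sets
   W_g = {(x, y) | (Phi_g x, Phi_g y) \notin A}; a finite subcover yields F. *)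

From HB Require Import structures.
From mathcomp Require Import all_boot monoid.
From mathcomp Require Import all_classical all_reals all_analysis.
From mathcomp Require Import finmap.
Local Open Scope classical_set_scope.

(* [compact_cover] is only stated for pointed spaces; a point of the compact
   set itself serves as the base point. *)
Definition pointed_at {T : topologicalType} (x0 : T) : Type := T.
HB.instance Definition _ (T : topologicalType) (x0 : T) :=
  Topological.copy (pointed_at x0) T.
HB.instance Definition _ (T : topologicalType) (x0 : T) :=
  isPointed.Build (pointed_at x0) x0.

Lemma compact_cover_compact {T : topologicalType} {C : set T} :
  compact C -> cover_compact C.
Proof.
have [[x0 _] cC|C0 _] := pselect (C !=set0).
  have : @compact (pointed_at x0) C by exact: cC.
  by rewrite compact_cover.
move=> I D f _ _; exists fset0 => // x Cx.
by exfalso; apply: C0; exists x.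
Qed.

Lemma compact_finite_subcover {T : topologicalType} {I : choiceType}
    {C O : set T} {W : I -> set T} :
  compact C -> open O -> (forall i, open (W i)) ->
  C `<=` O `|` \bigcup_i W i ->
  exists2 F : set I, finite_set F & C `<=` O `|` \bigcup_(i in F) W i.
Proof.
move=> cC oO oW sC.
pose f (o : option I) := if o is Some i then W i else O.
have of_ o : setT o -> open (f o) by case: o => [i|] _; [exact: oW|].
have covf : C `<=` \bigcup_(o in setT) f o.
  by move=> p /sC [Op|[i _ Wip]]; [exists None|exists (Some i)].
have [D' _ sD'] := compact_cover_compact cC _ _ _ of_ covf.
exists (Some @^-1` [set` D']).
  by apply: finite_preimage; [move=> i j _ _ []|exact: finite_fset].
by move=> p /sD' [[i|] /= Di fp]; [right; exists i|left].
Qed.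

Lemma unif_continuous_continuous {X Y : uniformType} {f : X -> Y} :
  unif_continuous f -> continuous f.
Proof.
move=> uf x P /nbhsP [E entE sEP]; apply/nbhsP.
exists ((fun xy : X * X => (f xy.1, f xy.2)) @^-1` E); first exact: uf.
by move=> y /xsectionP Exy; apply: sEP; apply/xsectionP.
Qed.

Lemma continuous_pair_map {X Y : topologicalType} {f : X -> Y} :
  continuous f -> continuous (fun p : X * X => (f p.1, f p.2)).
Proof.
move=> cf p Q [[Q1 Q2] /= [N1 N2] sQ].
exists (f @^-1` Q1, f @^-1` Q2); first by split; exact: cf.
by case=> a b [/= ? ?]; apply: (sQ (f a, f b)).
Qed.

Lemma interior_entourage_refl {X : uniformType} {U : set (X * X)} (x : X) :
  entourage U -> U° (x, x).
Proof.
move=> eU; have eV := entourage_split_ent eU; set V := split_ent U in eV *.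
exists (xsection [set p | V (p.2, p.1)] x, xsection V x).
  by split; apply: nbhs_entourage; [exact: entourage_inv|].
case=> a b [/xsectionP /= Vax /xsectionP Vxb].
exact: (@entourage_split X x a b U eU Vax Vxb).
Qed.

(* The second set is [VF] with an arbitrary index type in place of the group. *)
Lemma expansive_compact_sub_entourage {X : uniformType} {I : choiceType}
    {f : I -> X -> X} {A C U : set (X * X)} :
  closed A -> (forall i, continuous (f i)) ->
  (forall x y, x <> y -> exists i, ~ A (f i x, f i y)) ->
  compact C -> entourage U ->
  exists2 F : set I, finite_set F &
    C `&` [set xy | forall i, F i -> A (f i xy.1, f i xy.2)] `<=` U.
Proof.
move=> clA cf expA cC eU.
pose W i := (fun p : X * X => (f i p.1, f i p.2)) @^-1` ~` A.
have oW i : open (W i).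
  apply: open_comp; last exact: closed_openC.
  by move=> p _; apply: continuous_pair_map.
have [|F finF sC] := compact_finite_subcover cC (@open_interior _ U) oW.
  move=> [x y] _; have [<-|nxy] := pselect (x = y).
    by left; exact: interior_entourage_refl.
  by have [i nA] := expA x y nxy; right; exists i.
exists F => // p [/sC [/interior_subset //|[i Fi Wip]] VFp].
by exfalso; exact: Wip (VFp i Fi).
Qed.

Theorem lemma3p5 (G : groupType) (X : uniformType) (Phi : G -> X -> X)
    (A : set (X * X)) :
  finitely_generated G ->
  first_countable X -> locally_compact [set: X] -> paracompact X ->
  hausdorff_space X ->
  is_action Phi ->
  expansive_entourage Phi A -> proper_entourage A ->
  forall U : set (X * X), wide_entourage U ->
  exists F : set G, [/\ finite_set F, F !=set0 & VF Phi F A `<=` U].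
Proof.
move=> _ _ _ _ _ [ueq Phi1 _] [_ clA expA] [_ prA] U [eU [K [cK wK]]].
have cPhi g : continuous (Phi g).
  by apply: unif_continuous_continuous; case: (ueq g) => h [].
have cKAK : compact (K `*` ent_image A K) by apply: compact_setX => //; exact: prA.
have [F finF sVF] := expansive_compact_sub_entourage clA cPhi expA cKAK eU.
exists (@monoid.one G |` F); split.
- by rewrite finite_setU; split; [exact: finite_set1|].
- by exists (@monoid.one G); left.
move=> [x y] VFxy; have /= Axy : A (x, y).
  by have := VFxy (@monoid.one G) (or_introl erefl); rewrite Phi1.
have : (U `|` K `*` setT) (x, y) by rewrite wK.
case=> [//|[/= Kx _]]; apply: sVF; split; first by split; last exists x.
by move=> g Fg; apply: VFxy; right.
Qed.
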